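(* Let $k,a,b$ be positive real numbers and $\{S^{(a,b)}_{k,n}\}_{n\ge0}$ the $k$-FL sequence, and let $\alpha>\beta$ be the roots of $x^2-kx-1$. For any real number $p$ with $p\notin\{0,\alpha,\beta\}$ and any integer $n\ge1$, $\sum_{i=1}^n\frac{S^{(a,b)}_{k,i}}{p^i}=\frac{1}{(p^2-pk-1)p^n}\Big(-S^{(a,b)}_{k,n}-pS^{(a,b)}_{k,n+1}+p^{n+1}(a+bk)+2bp^n\Big)$.
   Context: The $k$-FL sequence (for positive reals $k,a,b$) is $S^{(a,b)}_{k,0}=2b$, $S^{(a,b)}_{k,1}=bk+a$, $S^{(a,b)}_{k,n}=kS^{(a,b)}_{k,n-1}+S^{(a,b)}_{k,n-2}$. *)

From Stdlib Require Import Reals.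
Open Scope R_scope.

Fixpoint kFL (k a b : R) (n : nat) : R :=
  match n with
  | O => 2 * b
  | S O => b * k + a
  | S ((S m) as m1) => k * kFL k a b m1 + kFL k a b m
  end.

(* Multiplying the partial sum by (p^2 - p k - 1) p^n telescopes: the recurrence
   S_(i+2) = k S_(i+1) + S_i cancels every term except the two at each end.  Since
   p^2 - p k - 1 = (p - alpha)(p - beta), the factor is invertible when p is not a root. *)

From Stdlib Require Import Reals Lra Lia.
Open Scope R_scope.

Lemma kFL_rec (k a b : R) (m : nat) :
  kFL k a b (S (S m)) = k * kFL k a b (S m) + kFL k a b m.
Proof. reflexivity. Qed.

Lemma quadratic_factor_roots (k alpha beta x : R) :
  alpha <> beta ->
  alpha ^ 2 - k * alpha - 1 = 0 -> beta ^ 2 - k * beta - 1 = 0 ->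
  x ^ 2 - k * x - 1 = (x - alpha) * (x - beta).
Proof.
  intros Hab Hal Hbe.
  assert (Hsum : alpha + beta = k).
  { assert (Hprod0 : (alpha - beta) * (alpha + beta - k) = 0) by (simpl in *; lra).
    apply Rmult_integral in Hprod0 as [H | H]; [exfalso; apply Hab |]; lra. }
  assert (Hprod : alpha * beta = -1) by (subst k; simpl in Hal; lra).
  subst k; simpl; nra.
Qed.

Lemma quadratic_neq0_off_roots (k alpha beta x : R) :
  alpha <> beta ->
  alpha ^ 2 - k * alpha - 1 = 0 -> beta ^ 2 - k * beta - 1 = 0 ->
  x <> alpha -> x <> beta -> x ^ 2 - x * k - 1 <> 0.
Proof.
  intros Hab Hal Hbe Hxa Hxb.
  rewrite (Rmult_comm x k), (quadratic_factor_roots k alpha beta x Hab Hal Hbe).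
  apply Rmult_integral_contrapositive; split; lra.
Qed.

Section RecurrenceSum.

Variables (k : R) (s : nat -> R).
Hypothesis s_rec : forall m, s (S (S m)) = k * s (S m) + s m.

Lemma recurrence_weighted_sum (p : R) (m : nat) : p <> 0 ->
  (p ^ 2 - p * k - 1) * p ^ S m * sum_f_R0 (fun j => s (S j) / p ^ S j) m =
  - s (S m) - p * s (S (S m)) + p ^ S (S m) * s 1%nat + p ^ S m * s O.
Proof.
  intros Hp.
  induction m as [|m IH].
  - simpl; rewrite s_rec; field; exact Hp.
  - cbn [sum_f_R0].
    set (sum := sum_f_R0 (fun j => s (S j) / p ^ S j) m) in *.
    assert (Hpow : p ^ m <> 0) by (apply pow_nonzero; exact Hp).
    assert (Hsplit :
      (p ^ 2 - p * k - 1) * p ^ S (S m) * (sum + s (S (S m)) / p ^ S (S m)) =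
      p * ((p ^ 2 - p * k - 1) * p ^ S m * sum) + (p ^ 2 - p * k - 1) * s (S (S m))).
    { cbn [pow]; field; split; assumption. }
    rewrite Hsplit, IH, (s_rec (S m)).
    cbn [pow]; ring.
Qed.

End RecurrenceSum.

Theorem theorem4p27 (k a b alpha beta p : R) (n : nat) :
  0 < k -> 0 < a -> 0 < b ->
  alpha ^ 2 - k * alpha - 1 = 0 -> beta ^ 2 - k * beta - 1 = 0 -> alpha > beta ->
  p <> 0 -> p <> alpha -> p <> beta ->
  (1 <= n)%nat ->
  sum_f_R0 (fun j => kFL k a b (S j) / p ^ (S j)) (pred n) =
  / ((p ^ 2 - p * k - 1) * p ^ n) *
    (- kFL k a b n - p * kFL k a b (S n) + p ^ (S n) * (a + b * k) + 2 * b * p ^ n).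
Proof.
  intros _ _ _ Hal Hbe Hab Hp Hpa Hpb Hn.
  assert (HD : p ^ 2 - p * k - 1 <> 0).
  { apply (quadratic_neq0_off_roots k alpha beta); auto with real. }
  destruct n as [|m]; [lia |]; cbn [pred].
  assert (Hpow : p ^ S m <> 0) by (apply pow_nonzero; exact Hp).
  apply (Rmult_eq_reg_l ((p ^ 2 - p * k - 1) * p ^ S m));
    [| apply Rmult_integral_contrapositive; split; assumption].
  rewrite (recurrence_weighted_sum k (kFL k a b) (kFL_rec k a b) p m Hp).
  change (kFL k a b 1) with (b * k + a); change (kFL k a b 0) with (2 * b).
  field; split; assumption.
Qed.
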